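(* Let $G=(V,E)$ be a multigraph with $n$ vertices and $m$ edges. Consider a process that performs $n-1$ edge contractions, with arbitrarily many edge deletions allowed between consecutive contractions; let $G_k$ denote the graph just before the $k$-th contraction (so $G_1=G$ if no deletions precede it), and let $u_kv_k$ be the edge of $G_k$ contracted at step $k$, for $k\in[n-1]$. Suppose that for some $\alpha>0$, the cost of the $k$-th contraction is at most $\alpha\cdot\min\{\deg_{G_k}(u_k),\deg_{G_k}(v_k)\}$ for every $k$. Then the total cost of all contractions is $O(\alpha m\log n)$; equivalently, $\sum_{k=1}^{n-1}\min\{\deg_{G_k}(u_k),\deg_{G_k}(v_k)\}=O(m\log n)$.
   Context: Contracting an edge $uv$ identifies $u$ and $v$ into a single vertex and removes the edges between $u$ and $v$; other edges (possibly becoming parallel) are kept with endpoints updated. Degrees count incident edges with multiplicity. *)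

From mathcomp Require Import all_boot all_order all_algebra.
Set Implicit Arguments. Unset Strict Implicit. Unset Printing Implicit Defensive.

(* A (loopless) multigraph is given by a duplicate-free vertex list V : seq nat
   and an edge multiset E : seq (nat * nat); an edge (a,b) joins a and b
   (orientation irrelevant), parallel edges are repeated entries. *)

Definition is_multigraph (V : seq nat) (E : seq (nat * nat)) : Prop :=
  uniq V /\ (forall e, e \in E -> [/\ e.1 \in V, e.2 \in V & e.1 != e.2]).

Definition deg (E : seq (nat * nat)) (x : nat) : nat :=
  count (fun e : nat * nat => (e.1 == x) || (e.2 == x)) E.

Definition sub_mset (E' E : seq (nat * nat)) : Prop :=
  forall e, count_mem e E' <= count_mem e E.

Definition has_edge (E : seq (nat * nat)) (u v : nat) : bool :=
  ((u, v) \in E) || ((v, u) \in E).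

Definition ren (u v x : nat) : nat := if x == v then u else x.

Definition contractE (u v : nat) (E : seq (nat * nat)) : seq (nat * nat) :=
  [seq (ren u v e.1, ren u v e.2) | e <- E &
     ~~ (((e.1 == u) && (e.2 == v)) || ((e.1 == v) && (e.2 == u)))].

Definition contractV (u v : nat) (V : seq nat) : seq nat := rem v V.

(* A contraction process of G=(V,E) with n-1 contractions:
   (Vs k, Es k) is G_{k+1} (0-indexed), the graph just before the (k+1)-th
   contraction, and (us k, vs k) the contracted edge. *)
Definition contraction_process (V : seq nat) (E : seq (nat * nat))
    (Vs : nat -> seq nat) (Es : nat -> seq (nat * nat)) (us vs : nat -> nat) : Prop :=
  [/\ Vs 0 = V, sub_mset (Es 0) E,
      (forall k, k < (size V).-1 ->
         [/\ us k \in Vs k, vs k \in Vs k, us k != vs k & has_edge (Es k) (us k) (vs k)])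
    & (forall k, k.+1 < (size V).-1 ->
         Vs k.+1 = contractV (us k) (vs k) (Vs k) /\
         sub_mset (Es k.+1) (contractE (us k) (vs k) (Es k)))].

From mathcomp Require Import all_boot all_order all_algebra.
From mathcomp Require Import zify.
Import Order.TTheory GRing.Theory Num.Theory.

Set Implicit Arguments.
Unset Strict Implicit.
Unset Printing Implicit Defensive.

(* Proof idea: a potential-function argument.  Give every current vertex x a
   weight w x, the number of original vertices merged into it (initially 1, and
   contracting uv gives u the weight w u + w v), so the weights always sum to
   n = |V|.  With L := up_log 2 n, every edge endpoint x carries the potential
   L - floor(log2 (w x)), and the potential of an edge set is the sum over all
   endpoints; initially it is at most 2 m L.
   When uv is contracted, the lighter endpoint s of {u, v} satisfies
   2 w s <= w u + w v, so the floor-log of its weight grows by at least one: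
   every edge at s loses one unit, no endpoint gains (weights only grow), and
   deletions only lower the potential.  Hence the k-th contraction pays
   deg s >= min (deg u) (deg v) out of the potential, and telescoping gives
   sum_k min (deg u_k) (deg v_k) <= 2 m up_log 2 n. *)

Lemma sum_sub_mset (E' E : seq (nat * nat)) (h : nat * nat -> nat) :
  sub_mset E' E -> \sum_(e <- E') h e <= \sum_(e <- E) h e.
Proof.
elim: E' E => [|x E' IH] E sub; first by rewrite big_nil.
have xE : x \in E.
  by rewrite -has_pred1 has_count; apply: leq_trans (sub x); rewrite /= eqxx.
rewrite big_cons (big_rem x xE) leq_add2l; apply: IH => e.
by rewrite count_rem xE /=; have := sub e; rewrite /=; case: (x == e) => /=; lia.
Qed.

Lemma count_as_sum (T : Type) (P : pred T) (s : seq T) :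
  count P s = \sum_(x <- s) (P x : nat).
Proof. by elim: s => [|x s IH]; rewrite ?big_nil ?big_cons //= IH. Qed.

Lemma sum_ge_pair (s : seq nat) (w : nat -> nat) u v :
  uniq s -> u \in s -> v \in s -> u != v -> w u + w v <= \sum_(y <- s) w y.
Proof.
move=> s_uniq us vs uv.
have vs' : v \in rem u s by rewrite (mem_rem_uniq _ s_uniq) inE eq_sym uv.
rewrite (big_rem u us) (big_rem v vs') /= addnA; exact: leq_addr.
Qed.

Lemma trunc_log_le_up_log (p n : nat) : 1 < p -> trunc_log p n <= up_log p n.
Proof.
move=> p_gt1; case: n => [|n]; first by rewrite trunc_log0.
have lo := trunc_logP p_gt1 (isT : 0 < n.+1).
have hi := up_logP n.+1 p_gt1.
by rewrite -(leq_exp2l _ _ p_gt1) (leq_trans lo hi).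
Qed.

Section Potential.

(* Upper bound on floor(log2) of any weight; the potential of an endpoint is
   the remaining room L - floor(log2 (w x)). *)
Variable L : nat.

Definition vpot (w : nat -> nat) (x : nat) : nat := L - trunc_log 2 (w x).

Definition potential (w : nat -> nat) (E : seq (nat * nat)) : nat :=
  \sum_(e <- E) (vpot w e.1 + vpot w e.2).

Definition merge (w : nat -> nat) (u v : nat) (y : nat) : nat :=
  if y == u then w u + w v else w y.

Definition lighter (w : nat -> nat) (u v : nat) : nat :=
  if w u <= w v then u else v.

Lemma lighter_in (w : nat -> nat) u v : (lighter w u v == u) || (lighter w u v == v).
Proof. by rewrite /lighter; case: ifP; rewrite eqxx ?orbT. Qed.

Lemma lighter_double (w : nat -> nat) u v : (w (lighter w u v)).*2 <= w u + w v.
Proof. by rewrite /lighter -addnn; case: ifP => le_uv; lia. Qed.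

Section OneContraction.

Variables (w : nat -> nat) (u v : nat).
Hypotheses (wu_gt0 : 0 < w u) (wv_gt0 : 0 < w v)
           (log_merged : trunc_log 2 (w u + w v) <= L).

Lemma vpot_contract x :
  vpot (merge w u v) (ren u v x) + (x == lighter w u v) <= vpot w x.
Proof.
set s := lighter w u v.
have ws_gt0 : 0 < w s by rewrite /s /lighter; case: ifP.
have log_s : (trunc_log 2 (w s)).+1 <= trunc_log 2 (w u + w v).
  by rewrite -trunc_log2_double // leq_trunc_log // lighter_double.
have log_u : trunc_log 2 (w u) <= trunc_log 2 (w u + w v) by rewrite leq_trunc_log ?leq_addr.
have log_v : trunc_log 2 (w v) <= trunc_log 2 (w u + w v) by rewrite leq_trunc_log ?leq_addl.
rewrite /vpot /merge /ren.
have [-> | xv] := eqVneq x v.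
  by rewrite !eqxx; case: (v =P s) => [sv | _]; [rewrite -sv in log_s|]; lia.
have [-> | xu] := eqVneq x u.
  by case: (u =P s) => [su | _]; [rewrite -su in log_s|]; lia.
have -> : (x == s) = false.
  by rewrite /s; case/orP: (lighter_in w u v) => /eqP ->; apply/negbTE.
by rewrite addn0.
Qed.

Lemma potential_contract (E : seq (nat * nat)) :
  deg E (lighter w u v) + potential (merge w u v) (contractE u v E) <= potential w E.
Proof.
rewrite /deg /potential /contractE big_map big_filter big_mkcond count_as_sum.
rewrite -big_split /=; apply: leq_sum => e _.
have := vpot_contract e.1; have := vpot_contract e.2.
by case: (e.1 == _); case: (e.2 == _); case: ifP => _ /=; lia.
Qed.

End OneContraction.

Lemma potential_le (w : nat -> nat) (E : seq (nat * nat)) :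
  potential w E <= 2 * size E * L.
Proof.
rewrite mulnAC mulnC -sum1_size big_distrl /=.
by apply: leq_sum => e _; rewrite /vpot; lia.
Qed.

End Potential.

Fixpoint weights (us vs : nat -> nat) (k : nat) : nat -> nat :=
  if k is k'.+1 then merge (weights us vs k') (us k') (vs k') else fun _ => 1.

Lemma weights_gt0 us vs k x : 0 < weights us vs k x.
Proof. by elim: k x => [|k IH] x //=; rewrite /merge; case: ifP; rewrite ?ltn_addr. Qed.

Lemma sum_merge (s : seq nat) (w : nat -> nat) u v :
  uniq s -> u \in s -> v \in s -> u != v ->
  \sum_(y <- rem v s) merge w u v y = \sum_(y <- s) w y.
Proof.
move=> s_uniq us vs uv.
have us' : u \in rem v s by rewrite (mem_rem_uniq _ s_uniq) inE uv.
rewrite (big_rem u us') (big_rem v vs) (big_rem u us') /merge eqxx.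
rewrite (eq_big_seq w) /=; first by lia.
move=> y; rewrite (mem_rem_uniq _ (rem_uniq _ s_uniq)) inE.
by case/andP => /negbTE ->.
Qed.

Lemma telescope_le (a P Q : nat -> nat) N :
  (forall k, k < N -> a k + Q k <= P k) ->
  (forall k, k.+1 < N -> P k.+1 <= Q k) ->
  \sum_(k < N) a k <= P 0.
Proof.
move=> pay drop.
have chain j : j < N -> \sum_(0 <= k < j.+1) a k + Q j <= P 0.
  elim: j => [|j IH] jN; first by rewrite big_nat1 pay.
  rewrite big_nat_recr //= -addnA.
  by have := pay _ jN; have := drop _ jN; have := IH (ltnW jN); lia.
rewrite -(big_mkord xpredT a); case: N pay drop chain => [|N] _ _ chain; first by rewrite big_geq.
by apply: leq_trans (chain N (ltnSn N)); apply: leq_addr.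
Qed.

Section Process.

Variables (V : seq nat) (E : seq (nat * nat)).
Variables (Vs : nat -> seq nat) (Es : nat -> seq (nat * nat)) (us vs : nat -> nat).
Hypotheses (G : is_multigraph V E) (P : contraction_process V E Vs Es us vs).

Let w := weights us vs.
Let L := up_log 2 (size V).

Lemma process_weight_total k :
  k < (size V).-1 -> uniq (Vs k) /\ \sum_(y <- Vs k) w k y = size V.
Proof.
have [[V_uniq _] [V0 _ edge next]] := (G, P).
elim: k => [|k IH] kN; first by rewrite V0 /w /= sum1_size.
have [uk vk uvk _] := edge k (ltnW kN).
have [IH_uniq IH_sum] := IH (ltnW kN).
have [-> _] := next k kN.
by rewrite /contractV rem_uniq //= /w /= sum_merge.
Qed.

Lemma process_step k : k < (size V).-1 ->
  minn (deg (Es k) (us k)) (deg (Es k) (vs k))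
  + potential L (w k.+1) (contractE (us k) (vs k) (Es k)) <= potential L (w k) (Es k).
Proof.
move=> kN; have [_ _ edge _] := P; have [uk vk uvk _] := edge k kN.
have [Vk_uniq Vk_sum] := process_weight_total kN.
have log_merged : trunc_log 2 (w k (us k) + w k (vs k)) <= L.
  rewrite /L; apply: leq_trans _ (@trunc_log_le_up_log 2 (size V) isT).
  apply: leq_trunc_log.
  by rewrite -Vk_sum sum_ge_pair.
apply: leq_trans (potential_contract (weights_gt0 _ _ _ _) (weights_gt0 _ _ _ _)
                    log_merged (Es k)).
by rewrite leq_add2r /lighter; case: ifP => _; rewrite ?geq_minl ?geq_minr.
Qed.

Lemma process_min_degree_sum :
  \sum_(k < (size V).-1) minn (deg (Es k) (us k)) (deg (Es k) (vs k))
    <= 2 * size E * up_log 2 (size V).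
Proof.
have [_ E0 _ next] := P.
apply: leq_trans (potential_le L (w 0) E).
apply: (@leq_trans (potential L (w 0) (Es 0))); last exact: sum_sub_mset.
apply: (telescope_le (a := fun k => minn (deg (Es k) (us k)) (deg (Es k) (vs k)))
          (P := fun k => potential L (w k) (Es k))
          (Q := fun k => potential L (w k.+1) (contractE (us k) (vs k) (Es k)))).
  exact: process_step.
by move=> k kN; have [_ sub] := next k kN; apply: sum_sub_mset.
Qed.

End Process.

Theorem lemmaC3 :
  exists C : nat,
  forall (V : seq nat) (E : seq (nat * nat))
         (Vs : nat -> seq nat) (Es : nat -> seq (nat * nat)) (us vs : nat -> nat),
    is_multigraph V E ->
    contraction_process V E Vs Es us vs ->
    (\sum_(k < (size V).-1) minn (deg (Es k) (us k)) (deg (Es k) (vs k))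
       <= C * size E * up_log 2 (size V))%N
    /\
    (forall (R : realFieldType) (alpha : R) (cost : nat -> R),
       (0 < alpha)%R ->
       (forall k, (k < (size V).-1)%N ->
          (cost k <= alpha * (minn (deg (Es k) (us k)) (deg (Es k) (vs k)))%:R)%R) ->
       (\sum_(k < (size V).-1) cost k <= alpha * (C * size E * up_log 2 (size V))%:R)%R).
Proof.
exists 2 => V E Vs Es us vs G P.
have mindeg_bound := process_min_degree_sum G P.
split=> // R alpha cost alpha_gt0 cost_le.
apply: (@le_trans _ _ (\sum_(k < (size V).-1)
     alpha * (minn (deg (Es k) (us k)) (deg (Es k) (vs k)))%:R)%R).
  by apply: ler_sum => k _; apply: cost_le.
rewrite -mulr_sumr -natr_sum; apply: ler_wpM2l; first exact: ltW.
by rewrite ler_nat.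
Qed.
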